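(* Let $G$ be a finite simple graph on the vertex set $\{x_{11},\ldots,x_{n1}\}$. For each $i=1,\ldots,n$ let $G_i$ be a graph on a vertex set $\{x_{i1},\ldots,x_{im_i}\}$ (these sets sharing only the indicated vertex $x_{i1}$ with $G$ and pairwise disjoint), where each $G_i$ is one of the following: (1) a connected chordal graph with at least two vertices such that $x_{i1}$ is a neighbor of some simplicial vertex of $G_i$; or (2) the cycle $C_5$ of length $5$. Then the graph $G'$ obtained by attaching $G_i$ to $G$ at the vertex $x_{i1}$ for each $i$ is vertex decomposable, hence shellable and sequentially Cohen--Macaulay.
   Context: Attaching $G_i$ to $G$ at $x_{i1}$ means forming the graph with vertex set $\bigcup_i V(G_i)$ and edge set $E(G)\cup\bigcup_i E(G_i)$. A graph is chordal if every cycle of length at least four has a chord; a vertex is simplicial if its neighbors form a clique. A graph $H$ is vertex decomposable if it has no edges, or else it has a vertex $x$ such that (1) both $H\setminus N_H[x]$ and $H\setminus\{x\}$ are vertex decomposable, and (2) for every independent set $S$ of $H\setminus N_H[x]$ there is $y\in N_H(x)$ with $S\cup\{y\}$ independent in $H\setminus\{x\}$. A graph is shellable if its independence complex (the simplicial complex of independent vertex sets) is shellable in the non-pure sense of Björner–Wachs, and sequentially Cohen--Macaulay if its edge ring $\mathbb{K}[x_v: v\in V]/(x_ux_v:\{u,v\}\in E)$ over a field $\mathbb{K}$ is sequentially Cohen--Macaulay. *)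

From mathcomp Require Import all_boot.
Set Implicit Arguments. Unset Strict Implicit. Unset Printing Implicit Defensive.

Section Graphs.
Variable T : finType.
Implicit Types (e : rel T) (S I F : {set T}).

Definition simple_graph e := irreflexive e /\ symmetric e.

Definition connected_graph e := forall u v : T, connect e u v.

(* a cycle of length >= 4: a duplicate-free sequence s, consecutive elements
   (cyclically) adjacent; a chord is an edge between two distinct vertices of s
   that are not cyclically consecutive in s *)
Definition chordal e :=
  forall s : seq T, uniq s -> 4 <= size s -> cycle e s ->
    exists x, exists y, [/\ x \in s, y \in s, x != y,
      (y != next s x) && (x != next s y) & e x y].

Definition simplicial e (v : T) :=
  forall u w, e v u -> e v w -> u != w -> e u w.

Definition indep e I := [forall u in I, forall v in I, ~~ e u v].

(* Vertex decomposability of the induced subgraph of e on the vertex set S.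
   N_H(x) = [set y in S | e x y], N_H[x] = x |: N_H(x). *)
Inductive vdec e : {set T} -> Prop :=
| vdec_noedge S :
    (forall u v, u \in S -> v \in S -> ~~ e u v) -> vdec e S
| vdec_shed S x :
    x \in S ->
    vdec e (S :\: (x |: [set y in S | e x y])) ->
    vdec e (S :\ x) ->
    (forall I, I \subset S :\: (x |: [set y in S | e x y]) -> indep e I ->
       exists2 y, y \in S /\ e x y & indep e (y |: I)) ->
    vdec e S.

Definition vertex_decomposable e := vdec e setT.

(* facets of the independence complex: maximal independent sets *)
Definition facet e F := indep e F /\ forall I, indep e I -> F \subset I -> I = F.

(* non-pure shellability (Bjorner--Wachs) of the independence complex:
   the facets can be ordered F_0, ..., F_{t-1} such that for all i < j there are
   k < j and x in F_j with F_i :&: F_j \subset F_k :&: F_j = F_j :\ x. *)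
Definition shellable e :=
  exists s : seq {set T},
    [/\ uniq s, (forall F, F \in s <-> facet e F) &
      forall i j, i < j -> j < size s ->
        exists k, exists x,
          [/\ k < j, x \in nth set0 s j,
              nth set0 s i :&: nth set0 s j \subset nth set0 s k :&: nth set0 s j
            & nth set0 s k :&: nth set0 s j = nth set0 s j :\ x]].
End Graphs.

Definition C5 : rel 'I_5 :=
  fun a b => (val b == (val a).+1 %% 5) || (val a == (val b).+1 %% 5).

Definition graph_iso (T1 T2 : finType) (e1 : rel T1) (e2 : rel T2) :=
  exists2 f : T1 -> T2, bijective f & forall a b, e2 (f a) (f b) = e1 a b.

(* The attached graph G'. Vertex (i, j) with j : 'I_(m i).+1 is x_{i,j+1};
   (i, ord0) is x_{i1}, the vertex of G. *)
Definition attach (n : nat) (m : 'I_n -> nat) (G : rel 'I_n)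
    (Gi : forall i, rel 'I_(m i).+1) : rel {i : 'I_n & 'I_(m i).+1} :=
  fun u v =>
    ((tag u == tag v) && Gi (tag u) (tagged u) (tagged_as u v))
    || [&& tagged u == ord0, tagged v == ord0 & G (tag u) (tag v)].

From mathcomp Require Import all_boot ssralg zmodp zify.
Set Implicit Arguments. Unset Strict Implicit. Unset Printing Implicit Defensive.

(* While the root x_{i1} of an intact piece G_i is present, it is a shedding vertex:
   G_i meets the rest of G' only through its root, so the shedding condition can be
   checked inside G_i, where a simplicial neighbour of the root (chordal case) or a
   direct inspection (C_5) settles it.  Deleting a root or its closed neighbourhood
   keeps every other piece intact or rootless.  Once no root is left, the graph is a
   disjoint union of pieces G_i - x_{i1}, each chordal or a path, so Dirac's lemma gives
   a simplicial vertex with a neighbour, and any neighbour of a simplicial vertex is a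
   shedding vertex.  Shellability follows as for every vertex decomposable graph: a
   shelling of G \ x followed by the cones x * F over a shelling of G \ N[x]. *)

Section Shedding.
Variables (T : finType) (e : rel T).
Hypotheses (e_irr : irreflexive e) (e_sym : symmetric e).
Implicit Types (A S I J : {set T}) (x v : T).

Lemma indepP I : reflect {in I &, forall u v, ~~ e u v} (indep e I).
Proof.
apply: (iffP forall_inP) => [H u v uI vI|H u uI].
  by move/forall_inP: (H u uI); apply.
by apply/forall_inP => v vI; apply: H.
Qed.

Lemma indepS I J : J \subset I -> indep e I -> indep e J.
Proof.
by move=> /subsetP JI /indepP eI; apply/indepP => u v uJ vJ; apply: eI; apply: JI.
Qed.

Lemma indepU1 I x : indep e I -> {in I, forall z, ~~ e x z} -> indep e (x |: I).
Proof.
move=> /indepP eI ex; apply/indepP => u v; rewrite !inE.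
move=> /orP[/eqP->|uI] /orP[/eqP->|vI]; rewrite ?e_irr //; first exact: ex.
  by rewrite e_sym; apply: ex.
exact: eI.
Qed.

Definition simplicial_in S v :=
  forall u w, u \in S -> w \in S -> e v u -> e v w -> u != w -> e u w.

Definition clique S := {in S &, forall u w, u != w -> e u w}.

Lemma clique_simplicial_in S v : clique S -> simplicial_in S v.
Proof. by move=> Sc u w uS wS _ _; apply: Sc. Qed.

Lemma simplicial_in_unique S v x : {in S, forall u, e v u -> u = x} -> simplicial_in S v.
Proof. by move=> vx u w uS wS /(vx u uS)-> /(vx w wS)->; rewrite eqxx. Qed.

Lemma simplicial_in_nbrs S A v : {in S, forall u, e v u -> u \in A} ->
  simplicial_in A v -> simplicial_in S v.
Proof. by move=> vA v_simp u w uS wS evu evw; apply: v_simp; rewrite ?vA. Qed.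

Definition simplicial_edge S := exists v x, [/\ v \in S, x \in S, e v x & simplicial_in S v].

(* [S \ N[x]], whose independence complex is the link of [x] in that of [S]. *)
Definition link S x := S :\: (x |: [set y in S | e x y]).

Lemma linkE S x z : (z \in link S x) = [&& z \in S, z != x & ~~ e x z].
Proof. by rewrite !inE negb_or; case: (z \in S); rewrite ?andbF ?andbT. Qed.

Lemma link_subD1 S x : link S x \subset S :\ x.
Proof. by apply/subsetP => z; rewrite linkE in_setD1 => /and3P[-> -> _]. Qed.

Lemma clique_or_link S : clique S \/ exists p q, p \in S /\ q \in link S p.
Proof.
case: (boolP [forall p in S, forall q in S, (p == q) || e p q]) => [Sc|].
  left=> p q pS qS pq.
  by move/forall_inP/(_ p pS)/forall_inP/(_ q qS): Sc; rewrite (negbTE pq).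
case/forall_inPn=> p pS /forall_inPn[q qS]; rewrite negb_or => /andP[pq npq].
by right; exists p, q; rewrite linkE qS eq_sym pq.
Qed.

Definition shedding S x := x \in S /\
  forall I, I \subset link S x -> indep e I ->
    exists2 y, y \in S /\ e x y & indep e (y |: I).

Lemma simplicial_shedding S v x :
  v \in S -> x \in S -> e v x -> simplicial_in S v -> shedding S x.
Proof.
move=> vS xS evx v_simp; split=> // I /subsetP I_link eI.
exists v; first by rewrite e_sym.
apply: indepU1 => // z /I_link; rewrite linkE => /and3P[zS zx nexz].
by apply: contra nexz => evz; apply: v_simp evx evz _; rewrite // eq_sym.
Qed.

Lemma vdec_invariant (P : {set T} -> Prop) :
  (forall S, P S -> {in S &, forall u v, ~~ e u v} \/
     exists x, [/\ shedding S x, P (link S x) & P (S :\ x)]) ->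
  forall S, P S -> vdec e S.
Proof.
move=> step S; elim: {S}#|S| {-2}S (leqnn #|S|) => [|N IH] S szS PS.
  apply: vdec_noedge => u v; move: szS; rewrite leqn0 => /eqP/cards0_eq ->.
  by rewrite inE.
case: (step S PS) => [noedge|[x [[xS x_shed] Plink PD1]]].
  by apply: vdec_noedge => u v; apply: noedge.
have szD1 : #|S :\ x| <= N by move: szS; rewrite (cardsD1 x S) xS; lia.
apply: (vdec_shed xS); [apply: IH | apply: IH | exact: x_shed] => //.
exact: leq_trans (subset_leq_card (link_subD1 S x)) szD1.
Qed.

End Shedding.

Section Chordal.
Variables (T : finType) (e : rel T).
Hypotheses (e_irr : irreflexive e) (e_sym : symmetric e) (e_chordal : chordal e).

Lemma next_cat_cons2 (p q : seq T) x y :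
  uniq (p ++ x :: y :: q) -> next (p ++ x :: y :: q) x = y.
Proof.
move=> U; rewrite next_nth mem_cat inE eqxx orbT.
case: p U => [|z p] /= U; first by rewrite eqxx.
have /negbTE-> : z != x.
  by apply: contraNneq (proj1 (andP U)) => ->; rewrite mem_cat inE eqxx orbT.
move: U => /andP[_]; rewrite cat_uniq => /and3P[_ /hasPn xp _].
rewrite index_cat (negbTE (xp x (mem_head _ _))) /= eqxx addn0.
by rewrite nth_cat ltnNge leqnSn /= subSn // subnn.
Qed.

Lemma next_last x (s : seq T) : uniq (x :: s) -> next (x :: s) (last x s) = x.
Proof.
move=> U; suff <- : prev (x :: s) x = last x s by rewrite (next_prev U).
case/andP: U => xs _; rewrite prev_nth mem_head; cbv iota beta.
by rewrite (memNindex xs) nth_last.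
Qed.

Lemma sorted_shortcut (p q r : seq T) x y :
  sorted e (p ++ x :: q ++ y :: r) -> e x y -> sorted e (p ++ x :: y :: r).
Proof.
have short : path e x (q ++ y :: r) -> e x y -> path e x (y :: r).
  by rewrite cat_path /= => /and3P[_ _ ->] ->.
case: p => [|z p] /=; first exact: short.
by rewrite !cat_path /= => /and3P[-> -> /short xr] /xr.
Qed.

(* [F] is a path from [s] to [t] whose inner vertices avoid [N[a]]. *)
Definition detour a s t (F : seq T) := [/\ sorted e F, uniq F, head t F = s,
  last s F = t & {in F, forall c, [|| c == s, c == t | (c != a) && ~~ e a c]}].

Lemma detour_shortcut a s t (p q r : seq T) x y :
  detour a s t (p ++ x :: q ++ y :: r) -> e x y -> detour a s t (p ++ x :: y :: r).
Proof.
move=> [srt U hd lst inner] exy.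
have sub : subseq (p ++ x :: y :: r) (p ++ x :: q ++ y :: r).
  rewrite cat_subseq //= eqxx -[y :: r]cat0s.
  by rewrite cat_subseq // sub0seq.
split.
- exact: sorted_shortcut srt exy.
- exact: subseq_uniq sub U.
- by move: hd; case: p {sub inner srt U lst}.
- by move: lst; rewrite !last_cat /= last_cat.
- by move=> c /(mem_subseq sub) /inner.
Qed.

(* A chord of the cycle [a :: F] avoids [a], so it shortcuts the detour [F]. *)
Lemma detour_chord a s t F : e a s -> e a t -> 3 <= size F -> detour a s t F ->
  exists p q r x y, [/\ F = p ++ x :: q ++ y :: r, 0 < size q & e x y].
Proof.
move=> eas eat szF [srt U hd lst inner].
case: F szF srt U hd lst inner => // s' F0 szF /= srt U hd lst inner; subst s'.
set F := s :: F0 in U lst inner; set c := a :: F.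
have aF : a \notin F.
  apply/negP => /inner /or3P[/eqP as_|/eqP at_|/andP[/negP //]].
    by rewrite -as_ e_irr in eas.
  by rewrite -at_ e_irr in eat.
have Uc : uniq c by rewrite /c /= aF.
have cyc : cycle e c by rewrite /c /= rcons_path srt eas lst e_sym eat.
have next_a : next c a = s by rewrite next_nth mem_head /= eqxx.
have next_t : next c t = a by rewrite -lst (next_last Uc).
have nbr_a y : y \in F -> e a y -> (y == next c a) || (a == next c y).
  move=> /inner /or3P[/eqP->|/eqP->|/andP[_ /negP//]].
    by rewrite next_a eqxx.
  by rewrite next_t eqxx orbT.
have chord p q r x y : e x y -> y != next c x -> F = p ++ x :: q ++ y :: r ->
    exists p q r x y, [/\ F = p ++ x :: q ++ y :: r, 0 < size q & e x y].
  move=> exy yx dF; exists p, q, r, x, y; split=> //.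
  rewrite lt0n size_eq0; apply: contra yx => /eqP q0; move: Uc; rewrite /c dF q0 -cat_cons.
  by move/(@next_cat_cons2 (a :: p)) => ->.
have [x [y [xc yc xy /andP[yx xy'] exy]]] := e_chordal Uc szF cyc.
have xF : x \in F.
  move: xc; rewrite inE => /orP[/eqP xa|//]; subst x.
  have yF : y \in F by move: yc; rewrite inE eq_sym (negbTE xy).
  by move: (nbr_a y yF exy); rewrite (negbTE yx) (negbTE xy').
have yF : y \in F.
  move: yc; rewrite inE => /orP[/eqP ya|//]; subst y.
  by move: (nbr_a x xF); rewrite e_sym (negbTE yx) (negbTE xy') => /(_ exy).
have [p [q dF]] : exists p q, F = p ++ x :: q by case/splitPr: xF => p q; exists p, q.
rewrite dF mem_cat inE eq_sym (negbTE xy) /= in yF; move: yF dF.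
case/orP=> /splitPr[r1 r2] dF.
  by apply: (chord r1 r2 q y x); rewrite 1?e_sym // dF -catA.
exact: (chord p r1 r2 x y).
Qed.

Lemma chordal_detour_adj a s t F : e a s -> e a t -> s != t -> detour a s t F -> e s t.
Proof.
move=> eas eat st; elim: {F}(size F) {-2}F (leqnn (size F)) => [|N IH] F szF dF.
  by move: szF dF; rewrite leqn0 => /nilP-> [_ _ /= ts]; rewrite ts eqxx in st.
case: (ltnP (size F) 3) => [F_small|F_big].
  case: dF => srt _ hd lst _; move: F_small srt hd lst st {szF IH}.
  case: F => [|s' [|t' [|//]]] _ /= srt hd lst; rewrite -?hd -?lst ?eqxx //.
  by move: srt => /andP[].
have [p [q [r [x [y [dF' q0 exy]]]]]] := detour_chord eas eat F_big dF.
apply: (IH (p ++ x :: y :: r)); last by apply: (detour_shortcut (q := q)) exy; rewrite -dF'.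
by move: szF q0; rewrite dF' !size_cat /= size_cat /= => *; lia.
Qed.

End Chordal.

Section Dirac.
Variables (T : finType) (e : rel T).
Hypotheses (e_irr : irreflexive e) (e_sym : symmetric e) (e_chordal : chordal e).
Implicit Types (A S : {set T}).

Definition induced A : rel T := [rel u v | [&& e u v, u \in A & v \in A]].

Lemma path_induced A x p : path (induced A) x p -> {subset p <= A}.
Proof.
elim: p x => [//|y p IH] x /= /andP[/and3P[_ _ yA] /IH pA] z.
by rewrite inE => /orP[/eqP->|/pA].
Qed.

Section Separator.
Variables (S : {set T}) (a b : T).

(* The component of [b] in [S \ N[a]], and the neighbours of [a] adjacent to it: by
   chordality they form a clique separating the component from [a]. *)
Definition comp := [set c in link e S a | connect (induced (link e S a)) b c].
Definition sep := [set s in S | e a s && [exists c in comp, e s c]].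

Lemma compE c : c \in comp -> [&& c \in S, c != a & ~~ e a c].
Proof. by rewrite inE -linkE => /andP[]. Qed.

Lemma sepE s : s \in sep -> s \in S /\ e a s.
Proof. by rewrite inE => /and3P[]. Qed.

Lemma sep_clique : clique e sep.
Proof.
move=> s t sS tS st; move: (sS) (tS) => /sepE[_ eas] /sepE[_ eat].
move: sS tS; rewrite !inE => /and3P[_ _ /exists_inP[c1 c1C esc1]].
move=> /and3P[_ _ /exists_inP[c2 c2C etc2]].
have symI : connect_sym (induced (link e S a)).
  by apply: sym_connect_sym => x y; rewrite /induced /= e_sym [(x \in _) && _]andbC.
have c1c2 : connect (induced (link e S a)) c1 c2.
  move: c1C c2C; rewrite !inE => /andP[_ bc1] /andP[_ bc2].
  by apply: connect_trans bc2; rewrite symI.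
move: etc2; case/connectP: c1c2 => p0 /shortenP[p P Up _] -> etc2.
have pS : {subset c1 :: p <= link e S a}.
  move=> c; rewrite inE => /orP[/eqP->|/(path_induced P)//].
  by move: c1C; rewrite inE => /andP[].
have [sp tp] : s \notin c1 :: p /\ t \notin c1 :: p.
  by split; apply/negP => /pS; rewrite linkE ?eas ?eat !andbF.
apply: (chordal_detour_adj e_irr e_sym e_chordal (F := s :: rcons (c1 :: p) t) eas eat st).
split=> [||//|/=|c].
- rewrite /= esc1 rcons_path (sub_path _ P) /= 1?e_sym //.
  by move=> x y /and3P[].
- by rewrite cons_uniq rcons_uniq mem_rcons inE negb_or st sp tp Up.
- by rewrite last_rcons.
- rewrite in_cons mem_rcons in_cons => /or3P[->|->|/pS]; rewrite ?orbT //.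
  by rewrite linkE => /and3P[_ -> ->]; rewrite !orbT.
Qed.

Lemma comp_nbr v u : v \in comp -> u \in S -> e v u -> u \in comp :|: sep.
Proof.
move=> vC uS evu; have /and3P[vS va nav] := compE vC.
rewrite in_setU; case eau: (e a u).
  apply/orP; right; apply/setIdP; split; rewrite // eau.
  by apply/exists_inP; exists v; rewrite // e_sym.
have ua : u != a by apply: contraNneq nav => <-; rewrite e_sym.
have uL : u \in link e S a by rewrite linkE uS ua eau.
move/setIdP: vC => [vL bv]; apply/orP; left; apply/setIdP; split => //.
by apply: connect_trans bv (connect1 _); rewrite /induced /= evu vL.
Qed.

End Separator.

Lemma chordal_simplicial_link S a b : a \in S -> b \in link e S a ->
  exists2 v, v \in link e S a & simplicial_in e S v.
Proof.
elim: {S}#|S| {-2}S (leqnn #|S|) a b => [|N IH] S.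
  by rewrite leqn0 => /eqP/cards0_eq -> a b; rewrite inE.
move=> szS a b aS bL; set C := comp S a b; set H := C :|: sep S a b.
have bC : b \in C by rewrite inE bL connect0.
have C_nbrs v : v \in C -> {in S, forall u, e v u -> u \in H}.
  by move=> vC u uS; apply: comp_nbr.
have szH : #|H| <= N.
  have HS : H \subset S :\ a.
    apply/subsetP => x; rewrite in_setU in_setD1.
    case/orP=> [/compE/and3P[-> -> //]|/sepE[-> eax]].
    by rewrite andbT; apply: contraTneq eax => ->; rewrite e_irr.
  by move: szS; rewrite (cardsD1 a S) aS; have := subset_leq_card HS; lia.
case: (clique_or_link e H) => [Hc|[p [q [pH qL]]]].
  exists b => //; apply: simplicial_in_nbrs (C_nbrs b bC) _.
  exact: clique_simplicial_in Hc.
(* Recurse from a base point seeing the whole separator, so that the simplicial vertex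
   found away from it lies in the component, whose neighbourhood stays inside [H]. *)
have [a' [b' [a'H b'L sep_nbr]]] : exists a' b', [/\ a' \in H, b' \in link e H a' &
    {in sep S a b, forall s, (s == a') || e a' s}].
  case: (boolP [exists s in sep S a b, exists y, y \in link e H s]).
    case/exists_inP=> s ssep /existsP[y yL]; exists s, y.
    split=> //; first by rewrite in_setU ssep orbT.
    move=> s' s'sep; case: (eqVneq s' s) => //= s's.
    by apply: (sep_clique ssep s'sep); rewrite eq_sym.
  move/exists_inPn=> no_link; exists p, q; split=> // s ssep.
  move/existsPn/(_ p): (no_link s ssep); rewrite linkE pH /= negb_and negbK.
  by rewrite negbK eq_sym e_sym.
have [v vL v_simp] := IH H szH a' b' a'H b'L.
have vC : v \in C.
  move: vL; rewrite linkE => /and3P[]; rewrite inE => /orP[//|vsep] va' /negP[].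
  by case/orP: (sep_nbr v vsep) => [/eqP vva'|//]; rewrite vva' eqxx in va'.
exists v; last exact: simplicial_in_nbrs (C_nbrs v vC) v_simp.
by rewrite linkE; move/compE: vC.
Qed.

Lemma chordal_simplicial_edge S u w : u \in S -> w \in S -> e u w -> simplicial_edge e S.
Proof.
move=> uS wS euw; set S1 := [set y in S | [exists z in S, e y z]].
have S1_nbrs v : v \in S -> {in S, forall y, e v y -> y \in S1}.
  move=> vS y yS evy; apply/setIdP; split=> //.
  by apply/exists_inP; exists v; rewrite // e_sym.
have [v vS1 v_simp] : exists2 v, v \in S1 & simplicial_in e S1 v.
  case: (clique_or_link e S1) => [S1c|[p [q [pS1 qL]]]].
    by exists u; [apply: (S1_nbrs w wS u uS); rewrite e_sym | exact: clique_simplicial_in].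
  have [v vL v_simp] := chordal_simplicial_link pS1 qL.
  by exists v => //; move: vL; rewrite linkE => /andP[].
move/setIdP: vS1 => [vS /exists_inP[x xS evx]].
by exists v, x; split=> //; exact: simplicial_in_nbrs (S1_nbrs v vS) v_simp.
Qed.

End Dirac.

Section Shellings.
Variable T : finType.
Implicit Types (F A B K : {set T}) (s : seq {set T}).

Definition shelling s := forall i j, i < j -> j < size s ->
  exists k, exists x,
    [/\ k < j, x \in nth set0 s j,
        nth set0 s i :&: nth set0 s j \subset nth set0 s k :&: nth set0 s j
      & nth set0 s k :&: nth set0 s j = nth set0 s j :\ x].

Lemma shelling_cat s1 s2 : shelling s1 -> shelling s2 ->
  {in s1 & s2, forall F B, exists K z,
     [/\ K \in s1, z \in B, F :&: B \subset K :&: B & K :&: B = B :\ z]} ->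
  shelling (s1 ++ s2).
Proof.
move=> sh1 sh2 cross i j ij; rewrite size_cat => js.
case: (ltnP j (size s1)) => j1.
  have [k [z [kj zj sub eqk]]] := sh1 i j ij j1.
  by exists k, z; rewrite !nth_cat j1 (ltn_trans ij j1) (ltn_trans kj j1).
have j2 : j - size s1 < size s2 by lia.
case: (ltnP i (size s1)) => i1.
  have [K [z [K1 zj sub eqK]]] := cross _ _ (mem_nth set0 i1) (mem_nth set0 j2).
  have k1 : index K s1 < size s1 by rewrite index_mem.
  exists (index K s1), z; rewrite !nth_cat i1 k1 (leq_gtF j1) nth_index //.
  by split=> //; apply: leq_trans k1 j1.
have [|k [z [kj zj sub eqk]]] := sh2 (i - size s1) (j - size s1) _ j2; first by lia.
exists (size s1 + k), z.
rewrite !nth_cat (leq_gtF i1) (leq_gtF j1) (leq_gtF (leq_addr k _)) addKn.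
by split=> //; lia.
Qed.

Lemma shelling_cone s x : {in s, forall A, x \notin A} -> shelling s ->
  shelling [seq x |: A | A <- s].
Proof.
move=> x_out sh i j ij; rewrite size_map => js.
have [k [z [kj zj sub eqk]]] := sh i j ij js.
have ks := ltn_trans kj js; have i_s := ltn_trans ij js.
exists k, z; rewrite !(nth_map set0) //; split=> //.
- by rewrite in_setU1 zj orbT.
- by rewrite -!setUIr setUS.
have zx : z != x by apply: contraNneq (x_out _ (mem_nth set0 js)) => <-.
apply/setP => u; rewrite -setUIr eqk !inE.
by case: (eqVneq u x) => [->|//]; rewrite eq_sym zx.
Qed.

End Shellings.

Section Facets.
Variables (T : finType) (e : rel T).
Hypotheses (e_irr : irreflexive e) (e_sym : symmetric e).
Implicit Types (S I J F A : {set T}) (x : T).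

Definition facet_on S F := [/\ F \subset S, indep e F &
  forall I, I \subset S -> indep e I -> F \subset I -> I = F].

Definition shellable_on S := exists s : seq {set T},
  [/\ uniq s, (forall F, F \in s <-> facet_on S F) & shelling s].

Lemma facet_on_extend S I : I \subset S -> indep e I ->
  exists2 F, facet_on S F & I \subset F.
Proof.
move=> IS eI; pose P J := [&& J \subset S, indep e J & I \subset J].
have PI : P I by rewrite /P IS eI subxx.
case: (arg_maxnP (fun J => #|J|) PI) => F /and3P[FS eF IF] F_max.
exists F => //; split=> // J JS eJ FJ; apply/eqP; rewrite eq_sym eqEcard FJ.
by apply: F_max; rewrite /P JS eJ (subset_trans IF FJ).
Qed.

Section Decomposition.
Variables (S : {set T}) (x : T).
Hypothesis x_shed : shedding e S x.

Lemma facet_on_deletion F : facet_on (S :\ x) F -> facet_on S F.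
Proof.
case=> FD eF F_max; have FS : F \subset S := subset_trans FD (subD1set S x).
split=> // I IS eI FI; case xI : (x \in I); last first.
  apply: F_max => //; apply/subsetP => z zI; rewrite in_setD1 (subsetP IS) // andbT.
  by apply: contraFneq xI => <-.
(* [F] avoids [N[x]], so the shedding condition extends it inside [S :\ x] *)
have F_link : F \subset link e S x.
  apply/subsetP => z zF; move: (subsetP FD z zF); rewrite in_setD1 linkE => /andP[-> ->].
  by move/indepP: eI; apply=> //; apply: (subsetP FI).
have [y [yS exy] eyF] := x_shed.2 F F_link eF.
have yF : y \in F.
  have yD : y |: F \subset S :\ x.
    rewrite subUset sub1set FD in_setD1 yS !andbT.
    by apply: contraTneq exy => ->; rewrite e_irr.
  by rewrite -(F_max _ yD eyF (subsetU1 _ _)) setU11.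
by move/indepP: eI => /(_ x y xI (subsetP FI y yF)); rewrite exy.
Qed.

Lemma facet_on_cone A : facet_on (link e S x) A -> facet_on S (x |: A).
Proof.
case=> AL eA A_max; have [xS _] := x_shed.
have A_nbr z : z \in A -> [&& z \in S, z != x & ~~ e x z].
  by move=> /(subsetP AL); rewrite linkE.
split.
- by rewrite subUset sub1set xS; apply/subsetP => z /A_nbr/andP[].
- by apply: indepU1 => // z /A_nbr/and3P[].
move=> I IS eI xAI; have xI : x \in I by apply: (subsetP xAI); rewrite setU11.
have IL : I :\ x \subset link e S x.
  apply/subsetP => z; rewrite in_setD1 linkE => /andP[zx zI].
  by rewrite zx (subsetP IS) //=; move/indepP: eI; apply.
have xA : x \notin A by apply/negP => /A_nbr; rewrite eqxx andbF.
have AI : A \subset I :\ x.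
  apply/subsetP => z zA; rewrite in_setD1 (subsetP xAI) ?in_setU1 ?zA ?orbT //.
  by rewrite andbT; apply: contraNneq xA => <-.
by rewrite -(A_max _ IL (indepS (subD1set I x) eI) AI) setD1K.
Qed.

Lemma facet_on_notin F : facet_on S F -> x \notin F -> facet_on (S :\ x) F.
Proof.
case=> FS eF F_max xF; split=> //.
  apply/subsetP => z zF; rewrite in_setD1 (subsetP FS) // andbT.
  by apply: contraNneq xF => <-.
by move=> I ID; apply: F_max; apply: subset_trans ID (subD1set S x).
Qed.

Lemma facet_on_in F : facet_on S F -> x \in F -> facet_on (link e S x) (F :\ x).
Proof.
case=> FS eF F_max xF.
have FL : F :\ x \subset link e S x.
  apply/subsetP => z; rewrite in_setD1 linkE => /andP[zx zF].
  by rewrite zx (subsetP FS) //=; move/indepP: eF; apply.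
split=> //; first exact: indepS (subD1set F x) eF.
move=> I IL eI FI; have xI : x \notin I.
  by apply/negP => /(subsetP IL); rewrite linkE eqxx andbF.
suff <- : x |: I = F by rewrite setU1K.
apply: F_max.
- rewrite subUset sub1set (subsetP FS) //.
  by apply: subset_trans IL (subset_trans (link_subD1 e S x) (subD1set S x)).
- by apply: indepU1 => // z /(subsetP IL); rewrite linkE => /and3P[].
- apply/subsetP => z zF; rewrite in_setU1; case: (eqVneq z x) => //= zx.
  by apply: (subsetP FI); rewrite in_setD1 zx.
Qed.

End Decomposition.

Lemma shellable_on_shedding S x : shedding e S x ->
  shellable_on (S :\ x) -> shellable_on (link e S x) -> shellable_on S.
Proof.
move=> x_shed [s1 [U1 M1 sh1]] [s2 [U2 M2 sh2]].
have x_out1 F : F \in s1 -> x \notin F.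
  by move=> /M1[FD _ _]; apply/negP => /(subsetP FD); rewrite in_setD1 eqxx.
have x_out2 A : A \in s2 -> x \notin A.
  by move=> /M2[AL _ _]; apply/negP => /(subsetP AL); rewrite linkE eqxx andbF.
exists (s1 ++ [seq x |: A | A <- s2]); split.
- rewrite cat_uniq U1 map_inj_in_uniq ?U2 ?andbT; last first.
    by move=> A B /x_out2 xA /x_out2 xB eqAB; rewrite -(setU1K xA) -(setU1K xB) eqAB.
  by apply/hasPn => _ /mapP[A _ ->]; apply/negP => /x_out1; rewrite setU11.
- move=> F; rewrite mem_cat; split.
    case/orP=> [/M1/(facet_on_deletion x_shed)//|/mapP[A /M2 fA ->]].
    exact: facet_on_cone.
  move=> fF; case xF: (x \in F); [apply/orP; right | apply/orP; left].
    apply/mapP; exists (F :\ x); rewrite ?setD1K //.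
    by apply/M2; apply: facet_on_in.
  by apply/M1; apply: facet_on_notin; rewrite ?xF.
apply: shelling_cat => //; first by apply: shelling_cone.
(* The cone [x |: A] meets [F] inside any facet of [S :\ x] containing [A]. *)
move=> F _ /x_out1 xF /mapP[A /M2[AL eA _] ->].
have [K /M1 K1 AK] := facet_on_extend (subset_trans AL (link_subD1 e S x)) eA.
have xK := x_out1 K K1.
exists K, x; split=> //; first exact: setU11.
  apply/subsetP => u; rewrite !inE => /andP[uF /orP[/eqP ux|uA]].
    by rewrite -ux uF in xF.
  by rewrite (subsetP AK) // uA orbT.
apply/setP => u; rewrite !inE; case: (eqVneq u x) => [->|ux] /=.
  by rewrite (negbTE xK).
by case uA: (u \in A); rewrite ?andbF ?andbT // (subsetP AK).
Qed.

Lemma vdec_shellable_on S : vdec e S -> shellable_on S.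
Proof.
elim=> {S} [S noedge|S x xS _ sh_link _ sh_del x_ext].
  exists [:: S]; split=> // [F|i j ij]; last first.
    by rewrite ltnS leqn0 => /eqP j0; rewrite j0 in ij.
  have eS : indep e S by apply/indepP.
  rewrite inE; split=> [/eqP->|[FS _ F_max]]; last by rewrite (F_max S).
  by split=> // I IS _ SI; apply/eqP; rewrite eqEsubset IS SI.
exact: (shellable_on_shedding (conj xS x_ext)).
Qed.

Lemma vdec_shellable : vertex_decomposable e -> shellable e.
Proof.
move=> /vdec_shellable_on[s [U M sh]]; exists s; split=> // F; rewrite M.
split=> [[_ eF F_max]|[eF F_max]]; split=> // I; first exact: F_max (subsetT I).
by move=> _; apply: F_max.
Qed.

End Facets.

Section Isomorphism.
Variables (T1 T2 : finType) (e1 : rel T1) (e2 : rel T2) (f : T1 -> T2) (g : T2 -> T1).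
Hypotheses (fK : cancel f g) (gK : cancel g f) (f_edge : forall a b, e2 (f a) (f b) = e1 a b).

Lemma g_edge u w : e1 (g u) (g w) = e2 u w.
Proof. by rewrite -f_edge !gK. Qed.

Lemma indep_preim (A : {set T2}) : indep e1 (f @^-1: A) = indep e2 A.
Proof.
apply/indepP/indepP=> [eA u w uA wA|eA u w]; last by rewrite !inE -f_edge; apply: eA.
by rewrite -g_edge; apply: eA; rewrite inE gK.
Qed.

Lemma shedding_iso x : shedding e1 setT x -> shedding e2 setT (f x).
Proof.
case=> _ x_shed; split=> [|I IL eI]; first exact: in_setT.
have [||y [_ exy] eyI] := x_shed (f @^-1: I).
- apply/subsetP => z; rewrite inE => /(subsetP IL).
  by rewrite !linkE !in_setT (inj_eq (can_inj fK)) f_edge.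
- by rewrite indep_preim.
exists (f y); first by rewrite in_setT f_edge.
rewrite -indep_preim (_ : _ @^-1: _ = y |: f @^-1: I) //.
by apply/setP => z; rewrite !inE (inj_eq (can_inj fK)).
Qed.

Lemma simplicial_in_preim (A : {set T2}) v :
  simplicial_in e1 (f @^-1: A) v -> simplicial_in e2 A (f v).
Proof.
move=> v_simp u w uA wA; rewrite -(gK u) -(gK w) !f_edge => evu evw uw.
apply: v_simp; rewrite ?inE ?gK //.
by apply: contra uw => /eqP->.
Qed.

End Isomorphism.

Section Cycle5.
Import GRing.Theory.
Local Open Scope ring_scope.

Lemma C5_irr : irreflexive C5.
Proof. by case=> [[|[|[|[|[|//]]]]] ?]. Qed.

Lemma C5_sym : symmetric C5.
Proof. by move=> a b; rewrite /C5 orbC. Qed.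

Lemma C5_rot (k a b : 'I_5) : C5 (k + a) (k + b) = C5 a b.
Proof.
case: k a b => k Hk [a Ha] [b Hb]; rewrite /C5 /=.
by apply/idP/idP => /orP[] /eqP H; apply/orP; [left|right|left|right]; apply/eqP; lia.
Qed.

Lemma C5_shedding0 : shedding C5 setT 0.
Proof.
split=> [|I /subsetP IL eI]; first exact: in_setT.
have I23 z : z \in I -> (z == 2) || (z == 3).
  by move/IL; rewrite linkE in_setT /=; case: z => [[|[|[|[|[|//]]]]] ?].
have [y e0y yI] : exists2 y, C5 0 y & {in I, forall z, ~~ C5 y z}.
  case: (boolP (2 \in I)) => I2; [exists 4 | exists 1] => // z zI;
    case/orP: (I23 z zI) => /eqP zE; subst z => //.
    by move/indepP: eI => /(_ 2 3 I2 zI).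
  by rewrite zI in I2.
by exists y; rewrite ?in_setT //; apply: (indepU1 C5_irr C5_sym).
Qed.

Lemma C5_simplicial_edge0 (S : {set 'I_5}) u w :
  0 \notin S -> u \in S -> w \in S -> C5 u w -> simplicial_edge C5 S.
Proof.
move=> S0 uS wS euw.
(* off the root, C5 is the path 1 - 2 - 3 - 4 *)
have path_step a b : a \in S -> b \in S -> C5 a b ->
    val b = (val a).+1 \/ val a = (val b).+1.
  move=> aS bS; have nz c : c \in S -> val c != 0%N.
    by move=> cS; apply: contraNneq S0 => c0; rewrite (_ : 0 = c) //; apply: val_inj.
  move: (nz a aS) (nz b bS); case: a b {aS bS} => [a Ha] [b Hb] /= a0 b0.
  by rewrite /C5 /= => /orP[] /eqP H; [left|right]; lia.
(* the leftmost vertex of [S] with a neighbour in [S] is a leaf *)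
pose P v := (v \in S) && [exists x in S, C5 v x].
have Pu : P u by rewrite /P uS; apply/exists_inP; exists w.
case: (arg_minnP val Pu) => v /andP[vS /exists_inP[x xS evx]] v_min.
have right_nbr y : y \in S -> C5 v y -> val y = (val v).+1.
  move=> yS evy; case: (path_step v y vS yS evy) => // vy.
  have : P y by rewrite /P yS; apply/exists_inP; exists v; rewrite // C5_sym.
  by move/v_min; rewrite vy ltnn.
exists v, x; split=> //; apply: (simplicial_in_unique (x := x)) => y yS evy.
by apply: val_inj; rewrite /= (right_nbr y yS evy) (right_nbr x xS evx).
Qed.

Lemma C5_iso_rooted (T : finType) (e : rel T) r : graph_iso C5 e ->
  exists f, exists g : T -> 'I_5,
    [/\ cancel f g, cancel g f, forall a b, e (f a) (f b) = C5 a b & f 0 = r].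
Proof.
case=> f [g fK gK] f_edge; exists (fun a => f (g r + a)), (fun u => g u - g r).
split=> [a|u|a b|]; first by rewrite fK addrC addKr.
- by rewrite addrC subrK gK.
- by rewrite f_edge C5_rot.
- by rewrite addr0 gK.
Qed.

Lemma C5_iso_shedding (T : finType) (e : rel T) r : graph_iso C5 e -> shedding e setT r.
Proof.
case/(C5_iso_rooted r)=> f [g [fK gK f_edge <-]].
exact: (shedding_iso fK gK f_edge C5_shedding0).
Qed.

Lemma C5_iso_simplicial_edge (T : finType) (e : rel T) r (S : {set T}) u w :
  graph_iso C5 e -> r \notin S -> u \in S -> w \in S -> e u w -> simplicial_edge e S.
Proof.
case/(C5_iso_rooted r)=> f [g [fK gK f_edge <-]] S0 uS wS euw.
have := @C5_simplicial_edge0 (f @^-1: S) (g u) (g w).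
rewrite !inE !gK (g_edge gK f_edge) => /(_ S0 uS wS euw)[v [x [vS xS evx v_simp]]].
move: vS xS; rewrite !inE => vS xS.
exists (f v), (f x); rewrite f_edge; split=> //.
exact: (simplicial_in_preim gK f_edge v_simp).
Qed.

End Cycle5.

Section Attach.
Variables (n : nat) (m : 'I_n -> nat) (G : rel 'I_n) (Gi : forall i, rel 'I_(m i).+1).
Arguments Gi : clear implicits.
Hypotheses (G_simple : simple_graph G) (Gi_simple : forall i : 'I_n, simple_graph (Gi i)).

Local Notation V := {i : 'I_n & 'I_(m i).+1}.
Local Notation vx i a := (@Tagged 'I_n i (fun i => 'I_(m i).+1) a).
Local Notation E := (attach G Gi).

Lemma attach_same i (a b : 'I_(m i).+1) : E (vx i a) (vx i b) = Gi i a b.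
Proof. by rewrite /attach /= eqxx /= tagged_asE (proj1 G_simple i) !andbF orbF. Qed.

Lemma attach_diff i j (a : 'I_(m i).+1) (b : 'I_(m j).+1) : i != j ->
  E (vx i a) (vx j b) = [&& a == ord0, b == ord0 & G i j].
Proof. by move=> ij; rewrite /attach /= (negbTE ij). Qed.

Lemma attach_irr : irreflexive E.
Proof. by case=> i a; rewrite attach_same (proj1 (Gi_simple i)). Qed.

Lemma attach_sym : symmetric E.
Proof.
case=> i a [j b]; case: (eqVneq i j) => [ij|ij].
  by subst j; rewrite !attach_same (proj2 (Gi_simple i)).
have ji : j != i by rewrite eq_sym.
by rewrite !attach_diff // (proj2 G_simple i j) andbCA.
Qed.

Lemma attach_nbr i (a : 'I_(m i).+1) u : a != ord0 -> E (vx i a) u ->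
  exists2 c, u = vx i c & Gi i a c.
Proof.
case: u => j c a0; case: (eqVneq i j) => [ij|ij].
  by subst j; rewrite attach_same; exists c.
by rewrite attach_diff // (negbTE a0).
Qed.

Definition piece (i : 'I_n) := [set u : V | tag u == i].

Definition closed (S : {set V}) := forall i : 'I_n, vx i ord0 \in S -> piece i \subset S.

Lemma closedD (S R : {set V}) i : closed S -> vx i ord0 \in R ->
  {subset R <= [pred u | (tag u == i) || (tagged u == ord0)]} -> closed (S :\: R).
Proof.
move=> S_closed rR R_sub j; rewrite in_setD => /andP[rjR rjS].
have ij : i != j by apply: contraNneq rjR => <-.
apply/subsetP => -[k c]; rewrite inE /= => /eqP kj; subst k.
rewrite in_setD (subsetP (S_closed j rjS)) ?inE // andbT.
apply: contraNN rjR => cR; case/orP: (R_sub _ cR) => /eqP /= => [ji|<- //].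
by rewrite ji eqxx in ij.
Qed.

Lemma shedding_attach_root (S : {set V}) i :
  piece i \subset S -> shedding (Gi i) setT ord0 -> shedding E S (vx i ord0).
Proof.
move=> /subsetP iS [_ root_shed].
have inS c : vx i c \in S by apply: iS; rewrite inE.
split=> // I IL eI.
pose J := [set c | vx i c \in I].
have [||y [_ ry] eyJ] := root_shed J.
- apply/subsetP => c; rewrite inE => /(subsetP IL).
  by rewrite !linkE in_setT attach_same eq_Tagged => /and3P[_ -> ->].
- by apply/indepP => a b; rewrite !inE -attach_same; apply/indepP.
exists (vx i y); first by rewrite inS attach_same.
have y0 : y != ord0 by apply: contraTneq ry => ->; rewrite (proj1 (Gi_simple i)).
apply: (indepU1 attach_irr attach_sym) => // u uI.
apply/negP => /(attach_nbr y0) [c uE yc]; subst u.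
by move/indepP: eyJ => /(_ y c); rewrite !inE eqxx uI orbT => /(_ isT isT); rewrite yc.
Qed.

Lemma simplicial_attach (S : {set V}) i (v : 'I_(m i).+1) : v != ord0 ->
  simplicial_in (Gi i) [set c | vx i c \in S] v -> simplicial_in E S (vx i v).
Proof.
move=> v0 v_simp u w uS wS /(attach_nbr v0)[c uE vc] /(attach_nbr v0)[d wE vd].
subst u w; rewrite attach_same => cd.
by apply: v_simp; rewrite ?inE //; apply: contra cd => /eqP->.
Qed.

Lemma closed_link_root (S : {set V}) i : closed S -> closed (link E S (vx i ord0)).
Proof.
move=> S_closed; apply: closedD => // [|u]; first exact: setU11.
rewrite !inE => /orP[/eqP->|/andP[_]]; first by rewrite /= eqxx.
case: u => j c; case: (eqVneq i j) => [->|ij] //=.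
by rewrite attach_diff // => /and3P[].
Qed.

Lemma closed_D1_root (S : {set V}) i : closed S -> closed (S :\ vx i ord0).
Proof.
by move=> S_closed; apply: closedD => // [|u]; rewrite inE // => /eqP->; rewrite inE /= eqxx.
Qed.

Hypothesis Gi_root_shedding : forall i, shedding (Gi i) setT ord0.
Hypothesis Gi_punctured : forall i (S : {set 'I_(m i).+1}) u w,
  ord0 \notin S -> u \in S -> w \in S -> Gi i u w -> simplicial_edge (Gi i) S.

Lemma rootless_shedding (S : {set V}) u w : (forall i, vx i ord0 \notin S) ->
  u \in S -> w \in S -> E u w -> exists x, shedding E S x.
Proof.
case: u w => i a [j b] S_noroot uS wS euw.
have ij : i = j.
  apply/eqP; apply: contraNT (S_noroot i) => ij.
  by move: euw; rewrite attach_diff // => /and3P[/eqP<-].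
subst j; rewrite attach_same in euw.
have [v [x [vT xT evx v_simp]]] : simplicial_edge (Gi i) [set c | vx i c \in S].
  by apply: (Gi_punctured (u := a) (w := b)); rewrite ?inE.
rewrite !inE in vT xT.
have v0 : v != ord0 by apply: contraNneq (S_noroot i) => <-.
exists (vx i x); apply: (simplicial_shedding attach_irr attach_sym (v := vx i v)) => //.
  by rewrite attach_same.
exact: simplicial_attach.
Qed.

Theorem attach_vdec : vertex_decomposable E.
Proof.
apply: (vdec_invariant (P := closed)); last by move=> i _; apply: subsetT.
move=> S S_closed; case: (pickP [pred i | vx i ord0 \in S]) => [i /= rS|no_root].
  right; exists (vx i ord0); split; [|exact: closed_link_root|exact: closed_D1_root].
  exact: shedding_attach_root (S_closed i rS) (Gi_root_shedding i).
have S_noroot i : vx i ord0 \notin S by apply: negbT; exact: no_root.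
case: (boolP [exists u in S, exists w in S, E u w]) => [|no_edge]; last first.
  left=> u w uS wS; apply: contraNN no_edge => euw.
  by apply/exists_inP; exists u => //; apply/exists_inP; exists w.
case/exists_inP=> u uS /exists_inP[w wS euw].
have [x x_shed] := rootless_shedding S_noroot uS wS euw.
right; exists x; split=> // j; rewrite ?linkE ?in_setD1 (negbTE (S_noroot j)) ?andbF //.
Qed.

End Attach.

Theorem corollary2p6 (n : nat) (m : 'I_n -> nat) (G : rel 'I_n)
    (Gi : forall i, rel 'I_(m i).+1) :
  simple_graph G ->
  (forall i, simple_graph (Gi i)) ->
  (forall i,
     (connected_graph (Gi i) /\ 1 <= m i /\ chordal (Gi i) /\
      exists v, simplicial (Gi i) v /\ Gi i ord0 v)
     \/ graph_iso C5 (Gi i)) ->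
  vertex_decomposable (attach G Gi) /\ shellable (attach G Gi).
Proof.
move=> G_simple Gi_simple Gi_kind.
have vd : vertex_decomposable (attach G Gi).
  apply: attach_vdec => // i; have [irr sym] := Gi_simple i.
    case: (Gi_kind i) => [[_ [_ [_ [v [v_simp rv]]]]]|iso]; last exact: C5_iso_shedding.
    apply: (simplicial_shedding irr sym (v := v)); rewrite ?in_setT 1?sym //.
    by move=> u w _ _; apply: v_simp.
  move=> S u w S0 uS wS euw; case: (Gi_kind i) => [[_ [_ [Gi_chordal _]]]|iso].
    exact: chordal_simplicial_edge uS wS euw.
  exact: C5_iso_simplicial_edge iso S0 uS wS euw.
split=> //; apply: vdec_shellable vd.
  exact: attach_irr.
exact: attach_sym.
Qed.
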